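(* For all integers $k\ge 1$ and $t\ge 1$, $$B_0(k,2t-1)+B_1(k+1,2t)=B_0(k,2t-2k-1)+p_{de}(2t-k-1).$$
   Context: For a partition $\pi$, $s(\pi)$ is its smallest part. For $j\ge1$, $\mathrm{Spt}j_{do}(n)$ is the set of partitions $\pi$ of $n$ in which $s(\pi)$ occurs exactly $j$ times and the remaining parts (those larger than $s(\pi)$) are pairwise distinct and each has parity different from that of $s(\pi)$. $B_0(j,n)$ (resp. $B_1(j,n)$) is the number of $\pi\in\mathrm{Spt}j_{do}(n)$ whose number of parts greater than $s(\pi)$ is even (resp. odd); $B_0(j,n)=B_1(j,n)=0$ for $n\le 0$. $p_{de}(n)$ is the number of partitions of $n$ into distinct even parts, with $p_{de}(0)=1$ and $p_{de}(n)=0$ for $n<0$. *)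

From mathcomp Require Import all_boot all_order all_algebra.
Set Implicit Arguments. Unset Strict Implicit. Unset Printing Implicit Defensive.

(* A partition of n is represented in frequency notation:
   m : {ffun 'I_n -> 'I_n.+1}, where (m i) is the number of times the part
   i+1 occurs (a part of a partition of n is at most n and occurs at most
   n times).  m is a partition of n iff sum_i (i+1) * m i = n. *)
Definition pweight (n : nat) (m : {ffun 'I_n -> 'I_n.+1}) : nat :=
  \sum_(i < n) (i.+1 * m i)%N.

(* pi (= m) is in Spt j_do(n) with smallest part s.+1 (index s):
   the smallest part occurs exactly j times, no smaller part occurs,
   every larger part occurs at most once and has parity different from
   that of the smallest part. *)
Definition spt_do_at (j n : nat) (m : {ffun 'I_n -> 'I_n.+1}) (s : 'I_n) : bool :=
  [&& pweight m == n,
      nat_of_ord (m s) == j,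
      [forall i : 'I_n, (i < s) ==> (nat_of_ord (m i) == 0%N)] &
      [forall i : 'I_n, (s < i) ==>
          ((nat_of_ord (m i) <= 1) &&
           ((nat_of_ord (m i) != 0%N) ==> (odd i.+1 != odd s.+1)))]].

Definition nlarger (n : nat) (m : {ffun 'I_n -> 'I_n.+1}) (s : 'I_n) : nat :=
  \sum_(i < n | s < i) nat_of_ord (m i).

Definition Bnat (b : bool) (j n : nat) : nat :=
  #|[set m : {ffun 'I_n -> 'I_n.+1} |
      [exists s : 'I_n, spt_do_at j m s && (odd (nlarger m s) == b)]]|.

Definition B0 (j : nat) (n : int) : nat :=
  match n with Posz n' => Bnat false j n' | Negz _ => 0%N end.
Definition B1 (j : nat) (n : int) : nat :=
  match n with Posz n' => Bnat true j n' | Negz _ => 0%N end.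

(* partitions of n into distinct even parts: part i+1 even iff i odd *)
Definition pde_nat (n : nat) : nat :=
  #|[set m : {ffun 'I_n -> 'I_n.+1} |
      (pweight m == n) &&
      [forall i : 'I_n, (nat_of_ord (m i) <= 1) &&
                        ((nat_of_ord (m i) != 0%N) ==> odd i)]]|.

Definition pde (n : int) : nat :=
  match n with Posz n' => pde_nat n' | Negz _ => 0%N end.

From mathcomp Require Import all_boot all_order all_algebra.
From mathcomp Require Import zify.
Set Implicit Arguments. Unset Strict Implicit. Unset Printing Implicit Defensive.

(* Write n = 2t - 1, which is odd.  The partitions counted by B_0(k, n) and B_1(k+1, n+1)
   form disjoint families (their numbers of larger parts differ in parity), and we sort them
   by their smallest part.  Those with smallest part 1 are, after deleting the 1s, exactly
   the partitions of n - k into distinct even parts.  Those with smallest part 2 do not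
   exist: all larger parts are odd, so the parity of the total contradicts that of n or n+1.
   Those with smallest part at least 3 correspond to the partitions counted by
   B_0(k, n - 2k): raise the smallest part by 2 and, if the part just above the old smallest
   part is present, trade it for one more copy of the new smallest part; the trade adds 1 to
   the total and flips the parity of the number of larger parts. *)

Lemma opposite_parity_gt_shift2 s i : i != s.+1 ->
  (s.+2 < i) && (odd i != odd s.+2) = (s < i) && (odd i != odd s).
Proof.
move=> i_neq; rewrite /= negbK.
case: (odd i =P odd s) => [_ | par_i]; rewrite ?andbF ?andbT //.
have i_neq2 : i != s.+2 by apply: contra_notN par_i => /eqP ->; rewrite /= negbK.
lia.
Qed.

Lemma setD1_notin (T : finType) (a : T) (A : {set T}) : a \notin A -> A :\ a = A.
Proof.
by move=> aNA; apply/setP => x; rewrite !inE; case: eqP => // ->; rewrite (negbTE aNA).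
Qed.

Section Codes.
Variable N : nat.

(* [(s, S) \in spt_code j b w] encodes the partition of [w] whose smallest part [s.+1] occurs
   [j] times and whose larger parts are the [i.+1] for [i \in S], with [odd #|S| = b]. *)
Definition spt_code (j : nat) (b : bool) (w : nat) : {set 'I_N * {set 'I_N}} :=
  [set X : 'I_N * {set 'I_N} | [&& X.1.+1 * j + \sum_(i in X.2) i.+1 == w,
                                   [forall i in X.2, (X.1 < i) && (odd i != odd X.1)] &
                                   odd #|X.2| == b]].

Definition pde_code (w : nat) : {set {set 'I_N}} :=
  [set S : {set 'I_N} | (\sum_(i in S) i.+1 == w) && [forall i in S, odd i]].

Lemma spt_codeP j (b : bool) w (s : 'I_N) (S : {set 'I_N}) :
  reflect [/\ s.+1 * j + \sum_(i in S) i.+1 = w,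
              {in S, forall i : 'I_N, (s < i) && (odd i != odd s)} & odd #|S| = b]
          ((s, S) \in spt_code j b w).
Proof.
rewrite inE /=; apply: (iffP and3P) => [[/eqP ? /forall_inP ? /eqP ?] | [? ? ?]].
  by split.
by split; [apply/eqP | apply/forall_inP | apply/eqP].
Qed.

Lemma pde_codeP w (S : {set 'I_N}) :
  reflect (\sum_(i in S) i.+1 = w /\ {in S, forall i : 'I_N, odd i}) (S \in pde_code w).
Proof.
rewrite inE; apply: (iffP andP) => [[/eqP ? /forall_inP ?] | [? ?]] //.
by split; [apply/eqP | apply/forall_inP].
Qed.

Lemma part_le_sum (S : {set 'I_N}) (i : 'I_N) : i \in S -> i.+1 <= \sum_(i in S) i.+1.
Proof. by move=> iS; rewrite (bigD1 i) //= leq_addr. Qed.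

Lemma spt_code_bound j (b : bool) w (s : 'I_N) (S : {set 'I_N}) :
  0 < j -> (s, S) \in spt_code j b w -> [/\ j <= w, s < w & {in S, forall i : 'I_N, i < w}].
Proof.
move=> j_gt0 /spt_codeP [<- _ _]; split.
- by apply: leq_trans (leq_addr _ _); rewrite leq_pmull.
- by apply: leq_trans (leq_addr _ _); rewrite leq_pmulr.
- by move=> i /part_le_sum/leq_trans; apply; rewrite leq_addl.
Qed.

Lemma spt_code0 j b : 0 < j -> spt_code j b 0 = set0.
Proof.
move=> j_gt0; apply/setP => -[s S]; rewrite in_set0.
by apply/negP => /(spt_code_bound j_gt0) [].
Qed.

Lemma mem_spt_code_shift j b w (s t a : 'I_N) (S : {set 'I_N}) :
  t = s.+2 :> nat -> a = s.+1 :> nat -> a \notin S ->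
  ((t, S) \in spt_code j b (w + j.*2)) = ((s, S) \in spt_code j b w).
Proof.
move=> t_eq a_eq aNS; rewrite !inE /= t_eq.
have -> : s.+3 * j + \sum_(i in S) i.+1 = (s.+1 * j + \sum_(i in S) i.+1) + j.*2.
  by rewrite !mulSn -addnn; lia.
rewrite eqn_add2r; congr [&& _, _ & _]; apply: eq_forallb_in => i iS.
apply: opposite_parity_gt_shift2; apply: contraNneq aNS => i_eq.
by have -> : a = i by apply: val_inj; rewrite /= a_eq i_eq.
Qed.

Lemma mem_spt_code_shift_add j b w (s t a : 'I_N) (S : {set 'I_N}) :
  t = s.+2 :> nat -> a = s.+1 :> nat -> a \notin S ->
  ((t, S) \in spt_code j.+1 b (w + j.*2).+1) = ((s, a |: S) \in spt_code j (~~ b) w).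
Proof.
move=> t_eq a_eq aNS.
rewrite !inE /= t_eq big_setU1 //= cardsU1 aNS add1n /= (can_eq negbK).
have -> : s.+3 * j.+1 + \sum_(i in S) i.+1
          = (s.+1 * j + (a.+1 + \sum_(i in S) i.+1)) + j.*2 + 1.
  by rewrite a_eq !mulSn !mulnS -addnn; lia.
rewrite addn1 eqSS eqn_add2r; congr [&& _, _ & _].
have above_S i : i \in S -> i != s.+1 :> nat.
  by apply: contraTneq => i_eq; have -> : i = a by apply: val_inj; rewrite /= a_eq i_eq.
apply/forall_inP/forall_inP => [above i | above i iS].
  case/setU1P => [-> | iS]; first by rewrite a_eq ltnSn /=; case: (odd s).
  by rewrite -opposite_parity_gt_shift2 ?above_S ?above.
by rewrite opposite_parity_gt_shift2 ?above_S // above // setU1r.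
Qed.

Lemma odd_sum_even_parts (S : {set 'I_N}) : {in S, forall i : 'I_N, ~~ odd i} ->
  odd (\sum_(i in S) i.+1) = odd #|S|.
Proof.
move=> even_S; rewrite (eq_bigr (fun i : 'I_N => i + 1)) => [|i _]; last by rewrite addn1.
rewrite big_split /= sum1_card oddD.
have even_sum : ~~ odd (\sum_(i in S) (i : nat)).
  by rewrite -dvdn2; apply: dvdn_sum => i /even_S; rewrite dvdn2.
by rewrite (negbTE even_sum).
Qed.

Lemma card_split_fst (A : {set 'I_N * {set 'I_N}}) :
  #|A| = #|[set X in A | X.1 == 0 :> nat]| + #|[set X in A | X.1 == 1 :> nat]|
         + #|[set X in A | 1 < X.1]|.
Proof.
rewrite -(cardsID [set X : 'I_N * {set 'I_N} | X.1 == 0 :> nat] A).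
rewrite -(cardsID [set X : 'I_N * {set 'I_N} | X.1 == 1 :> nat] (A :\: _)) addnA.
congr (_ + _ + _); apply: eq_card => -[[[|[|s]] lt_s] S].
all: by rewrite !inE /= ?andbT ?andbF // andbC.
Qed.

End Codes.

Arguments spt_code {N}.
Arguments pde_code {N}.

Lemma mem_spt_code_ord0 N j b w (S : {set 'I_N.+1}) :
  ((ord0, S) \in spt_code j b w) =
  [&& j + \sum_(i in S) i.+1 == w, [forall i in S, odd i] & odd #|S| == b].
Proof.
rewrite inE /= mul1n; congr [&& _, _ & _]; apply: eq_forallb_in => i _.
rewrite eqbF_neg negbK andb_idl // => odd_i.
by rewrite lt0n; apply: contraTneq odd_i => ->.
Qed.

Section Frequencies.
Variable w : nat.

Definition freq_of (f : 'I_w -> nat) : {ffun 'I_w -> 'I_w.+1} := [ffun i => inord (f i)].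

Lemma freq_ofE (f : 'I_w -> nat) i : f i <= w -> freq_of f i = f i :> nat.
Proof. by move=> le_fw; rewrite ffunE inordK. Qed.

Lemma bool_le_width (b : bool) (i : 'I_w) : b <= w.
Proof. by case: b => //; apply: leq_ltn_trans (ltn_ord i). Qed.

Definition spt_freq (j : nat) (X : 'I_w * {set 'I_w}) : {ffun 'I_w -> 'I_w.+1} :=
  freq_of (fun i => if i == X.1 then j else i \in X.2).

Definition larger_parts (m : {ffun 'I_w -> 'I_w.+1}) (s : 'I_w) : {set 'I_w} :=
  [set i : 'I_w | s < i & m i != 0 :> nat].

Section SmallestPart.
Variables (j : nat) (s : 'I_w) (S : {set 'I_w}).
Hypothesis j_le_w : j <= w.

Lemma spt_freqE i : spt_freq j (s, S) i = (if i == s then j else i \in S) :> nat.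
Proof. by rewrite freq_ofE //; case: eqP => // _; apply: bool_le_width. Qed.

Lemma pweight_spt_freq : s \notin S ->
  pweight (spt_freq j (s, S)) = s.+1 * j + \sum_(i in S) i.+1.
Proof.
move=> sNS; rewrite /pweight (bigD1 s) //= spt_freqE eqxx; congr (_ + _).
rewrite [RHS](eq_bigl (fun i => (i != s) && (i \in S))); last first.
  by move=> i; case: eqP => [-> |] //; rewrite (negbTE sNS).
rewrite [RHS]big_mkcondr; apply: eq_bigr => i /negbTE i_neq_s.
by rewrite spt_freqE i_neq_s; case: (i \in S); rewrite ?muln1 ?muln0.
Qed.

Lemma nlarger_spt_freq :
  {in S, forall i : 'I_w, s < i} -> nlarger (spt_freq j (s, S)) s = #|S|.
Proof.
move=> gt_s; rewrite /nlarger -sum1_card.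
rewrite [RHS](eq_bigl (fun i : 'I_w => (s < i) && (i \in S))); last first.
  by move=> i; case iS: (i \in S); rewrite ?andbT ?andbF ?gt_s.
rewrite big_mkcondr; apply: eq_bigr => i s_lt_i.
by rewrite spt_freqE ifF //; apply/negbTE; rewrite neq_ltn s_lt_i orbT.
Qed.

End SmallestPart.

Lemma spt_do_at_spt_freq j (b : bool) (s : 'I_w) (S : {set 'I_w}) :
  0 < j -> (s, S) \in spt_code j b w ->
  spt_do_at j (spt_freq j (s, S)) s && (odd (nlarger (spt_freq j (s, S)) s) == b).
Proof.
move=> j_gt0 XT; have [j_le_w _ _] := spt_code_bound j_gt0 XT.
case/spt_codeP: XT => weight_w gt_s odd_b.
have sNS : s \notin S by apply/negP => /gt_s; rewrite ltnn.
rewrite (nlarger_spt_freq j_le_w); last by move=> i /gt_s /andP [].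
rewrite /spt_do_at (pweight_spt_freq j_le_w sNS) weight_w (spt_freqE _ _ j_le_w).
rewrite odd_b !eqxx andbT /=.
apply/andP; split; apply/forallP => i; apply/implyP => cmp_si.
  rewrite (spt_freqE _ _ j_le_w).
  rewrite ifF; last by apply/negbTE; rewrite neq_ltn cmp_si.
  by case iS: (i \in S) => //; case/andP: (gt_s i iS) => /(ltn_trans cmp_si); rewrite ltnn.
rewrite (spt_freqE _ _ j_le_w) ifF; last by apply/negbTE; rewrite neq_ltn cmp_si orbT.
by case iS: (i \in S) => //=; case/andP: (gt_s i iS) => _; rewrite (can_eq negbK).
Qed.

Lemma spt_freq_larger_parts j m s : spt_do_at j m s -> spt_freq j (s, larger_parts m s) = m.
Proof.
case/and4P=> _ /eqP m_s /forallP below /forallP above.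
have j_le_w : j <= w by rewrite -m_s -ltnS.
apply/ffunP => i; apply/val_inj => /=; rewrite (spt_freqE _ _ j_le_w) inE.
case: eqP => [-> | /eqP i_neq_s]; first by rewrite m_s.
case: (ltngtP s i) => [s_lt_i | i_lt_s | eq_si]; last by case/eqP: i_neq_s; apply/val_inj.
  by rewrite /=; case/andP: (implyP (above i) s_lt_i); case: (nat_of_ord (m i)) => [|[]].
by rewrite /= (eqP (implyP (below i) i_lt_s)).
Qed.

Lemma larger_parts_code j m s : spt_do_at j m s ->
  (s, larger_parts m s) \in spt_code j (odd (nlarger m s)) w.
Proof.
move=> sm; have m_eq := spt_freq_larger_parts sm.
have j_le_w : j <= w by case/and4P: sm => _ /eqP <- _ _; rewrite -ltnS.
have gt_s : {in larger_parts m s, forall i : 'I_w, s < i}.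
  by move=> i; rewrite inE => /andP [].
have sNL : s \notin larger_parts m s by apply/negP => /gt_s; rewrite ltnn.
apply/spt_codeP; split.
- by rewrite -(pweight_spt_freq j_le_w sNL) m_eq; case/and4P: sm => /eqP.
- move=> i iL; rewrite gt_s //=; case/and4P: sm => _ _ _ /forallP /(_ i).
  move: iL; rewrite inE => /andP [-> nz_i] /andP [_]; rewrite nz_i /=.
  by rewrite (can_eq negbK).
- by rewrite -{2}m_eq (nlarger_spt_freq j_le_w).
Qed.

Lemma spt_do_at_unique j (m : {ffun 'I_w -> 'I_w.+1}) (s1 s2 : 'I_w) :
  0 < j -> spt_do_at j m s1 -> spt_do_at j m s2 -> s1 = s2.
Proof.
move=> j_gt0 /and4P [_ /eqP m1 /forallP below1 _] /and4P [_ /eqP m2 /forallP below2 _].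
apply/val_inj; case: (ltngtP s1 s2) => // lt.
  by move: (implyP (below2 s1) lt); rewrite m1 => /eqP j0; rewrite j0 in j_gt0.
by move: (implyP (below1 s2) lt); rewrite m2 => /eqP j0; rewrite j0 in j_gt0.
Qed.

Lemma card_Bnat j b : 0 < j -> Bnat b j w = #|@spt_code w j b w|.
Proof.
move=> j_gt0; rewrite /Bnat -(card_in_imset (f := spt_freq j)).
  apply: eq_card => m; rewrite inE; apply/existsP/imsetP.
    case=> s /andP [sm /eqP <-]; exists (s, larger_parts m s).
      exact: larger_parts_code.
    by rewrite spt_freq_larger_parts.
  case=> -[s S] XT ->; exists s; exact: spt_do_at_spt_freq.
move=> [s1 S1] [s2 S2] X1T X2T eq_m.
have /andP [sm1 _] := spt_do_at_spt_freq j_gt0 X1T.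
have /andP [sm2 _] := spt_do_at_spt_freq j_gt0 X2T.
rewrite -eq_m in sm2; have eq_s := spt_do_at_unique j_gt0 sm1 sm2; subst s2.
have /spt_codeP [_ gt1 _] := X1T; have /spt_codeP [_ gt2 _] := X2T.
have [j_le_w _ _] := spt_code_bound j_gt0 X1T.
have sN1 : s1 \notin S1 by apply/negP => /gt1; rewrite ltnn.
have sN2 : s1 \notin S2 by apply/negP => /gt2; rewrite ltnn.
congr (_, _); apply/setP => i; move/ffunP/(_ i)/(congr1 (@nat_of_ord _)): eq_m.
rewrite !(spt_freqE _ _ j_le_w); case: eqP => [-> _ | _ /eqP].
  by rewrite (negbTE sN1) (negbTE sN2).
by case: (i \in S1) (i \in S2) => [] [].
Qed.

Definition freq_of_set (S : {set 'I_w}) : {ffun 'I_w -> 'I_w.+1} :=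
  freq_of (fun i => i \in S).

Lemma freq_of_setE S i : freq_of_set S i = (i \in S) :> nat.
Proof. exact/freq_ofE/bool_le_width. Qed.

Lemma pweight_freq_of_set S : pweight (freq_of_set S) = \sum_(i in S) i.+1.
Proof.
rewrite /pweight [RHS]big_mkcond; apply: eq_bigr => i _.
by rewrite freq_of_setE; case: (i \in S); rewrite ?muln1 ?muln0.
Qed.

Lemma card_pde_nat : pde_nat w = #|@pde_code w w|.
Proof.
rewrite /pde_nat -(card_in_imset (f := freq_of_set)); last first.
  move=> S1 S2 _ _ /ffunP eq_S; apply/setP => i.
  move/(congr1 (@nat_of_ord _)): (eq_S i); rewrite !freq_of_setE.
  by case: (i \in S1) (i \in S2) => [] [].
apply: eq_card => m; rewrite inE; apply/andP/imsetP.
  case=> /eqP weight_w /forallP m01.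
  have m_eq : freq_of_set [set i | m i != 0 :> nat] = m.
    apply/ffunP => i; apply/val_inj => /=; rewrite freq_of_setE inE.
    by case/andP: (m01 i); case: (nat_of_ord (m i)) => [|[]].
  exists [set i | m i != 0 :> nat] => //; apply/pde_codeP; split.
    by rewrite -pweight_freq_of_set m_eq.
  by move=> i; rewrite inE => nz_i; case/andP: (m01 i) => _; rewrite nz_i.
case=> S /pde_codeP [weight_w odd_S] ->; split.
  by rewrite pweight_freq_of_set weight_w.
by apply/forallP => i; rewrite freq_of_setE; case iS: (i \in S) => //=; apply: odd_S.
Qed.

End Frequencies.

Section Widening.
Variables (w N : nat) (le_wN : w <= N).
Local Notation wid := (widen_ord le_wN).

Lemma widen_ord_inj : injective wid.
Proof. by move=> i1 i2 /(congr1 val) eq_i; apply: val_inj. Qed.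

Lemma sum_widen (S : {set 'I_w}) (F : nat -> nat) :
  \sum_(i in wid @: S) F i = \sum_(i in S) F i.
Proof. by rewrite big_imset //; apply: in2W widen_ord_inj. Qed.

Lemma widen_preimset (S : {set 'I_N}) :
  {in S, forall i : 'I_N, i < w} -> wid @: [set i | wid i \in S] = S.
Proof.
move=> lt_w; apply/setP => i; apply/imsetP/idP => [[i' + ->] | iS]; first by rewrite inE.
have wid_i : wid (Ordinal (lt_w i iS)) = i by apply: val_inj.
by exists (Ordinal (lt_w i iS)); rewrite ?inE wid_i.
Qed.

Lemma forall_in_widen (S : {set 'I_w}) (P : nat -> bool) :
  [forall i in wid @: S, P i] = [forall i in S, P i].
Proof.
apply/forall_inP/forall_inP => [P_S i iS | P_S _ /imsetP [i iS ->]]; last exact: P_S.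
exact: (P_S (wid i) (imset_f _ iS)).
Qed.

Lemma mem_spt_code_widen j b u (s : 'I_w) (S : {set 'I_w}) :
  ((wid s, wid @: S) \in spt_code j b u) = ((s, S) \in spt_code j b u).
Proof.
rewrite !inE /= sum_widen card_imset; last exact: widen_ord_inj.
by rewrite (forall_in_widen S (fun i => (s < i) && (odd i != odd s))).
Qed.

Lemma mem_pde_code_widen u (S : {set 'I_w}) : (wid @: S \in pde_code u) = (S \in pde_code u).
Proof. by rewrite !inE sum_widen (forall_in_widen S odd). Qed.

Lemma card_spt_code_widen j b : 0 < j -> #|@spt_code w j b w| = #|@spt_code N j b w|.
Proof.
move=> j_gt0.
rewrite -(card_in_imset (f := fun X : 'I_w * {set 'I_w} => (wid X.1, wid @: X.2))); last first.
  move=> [s1 S1] [s2 S2] _ _ /= [/val_inj -> eq_S].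
  by rewrite (imset_inj widen_ord_inj eq_S).
apply: eq_card => -[s S]; apply/imsetP/idP => [[[s' S'] + [-> ->]] | sS].
  by rewrite mem_spt_code_widen.
have [_ lt_s lt_S] := spt_code_bound j_gt0 sS.
exists (Ordinal lt_s, [set i | wid i \in S]); last first.
  by rewrite widen_preimset //; congr (_, _); apply: val_inj.
have wid_s : wid (Ordinal lt_s) = s by apply: val_inj.
by rewrite -mem_spt_code_widen widen_preimset // wid_s.
Qed.

Lemma card_pde_code_widen : #|@pde_code w w| = #|@pde_code N w|.
Proof.
rewrite -(card_in_imset (f := fun S : {set 'I_w} => wid @: S)); last first.
  by move=> S1 S2 _ _; apply: (imset_inj widen_ord_inj).
apply: eq_card => S; apply/imsetP/idP => [[S' + ->] | SP]; first by rewrite mem_pde_code_widen.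
have lt_S : {in S, forall i : 'I_N, i < w}.
  by case/pde_codeP: SP => <- _ i /part_le_sum.
by exists [set i | wid i \in S]; rewrite ?widen_preimset // -mem_pde_code_widen widen_preimset.
Qed.

End Widening.

Section Counting.
Variables (n k : nat).
Hypothesis k_gt0 : 0 < k.
Local Notation T := (@spt_code n.+1).
Local Notation U := (T k false n :|: T k.+1 true n.+1).

Lemma card_spt_code_union : #|U| = #|T k false n| + #|T k.+1 true n.+1|.
Proof.
rewrite -cardsUI (_ : _ :&: _ = set0) ?cards0 ?addn0 //; apply/setP => -[s S].
rewrite in_set0 in_setI; apply/negbTE/negP.
by case/andP => /spt_codeP [_ _ par] /spt_codeP [_ _]; rewrite par.
Qed.

Lemma card_smallest_one : k <= n ->
  #|[set X in U | X.1 == 0 :> nat]| = #|@pde_code n.+1 (n - k)|.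
Proof.
move=> le_kn; rewrite -(card_in_imset (f := fun S : {set 'I_n.+1} => (@ord0 n, S))); last first.
  by move=> S1 S2 _ _ [].
apply: eq_card => -[s S]; rewrite inE in_setU /=; apply/andP/imsetP.
  case=> inU /eqP s0; have s_eq : s = ord0 by apply: val_inj.
  subst s; exists S => //; apply/pde_codeP.
  case/orP: inU; rewrite mem_spt_code_ord0 => /and3P [/eqP sum_S /forall_inP odd_S _];
    by split => //; lia.
case=> S' /pde_codeP [sum_S odd_S] [-> ->]; split => //.
rewrite !mem_spt_code_ord0 sum_S (_ : [forall i in S', odd i]); last exact/forall_inP.
by case: (odd #|S'|); rewrite /= ?orbF; apply/eqP; lia.
Qed.

Lemma smallest_two_empty : odd n -> [set X in U | X.1 == 1 :> nat] = set0.
Proof.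
move=> odd_n; apply/setP => -[s S]; rewrite inE in_setU in_set0 /=.
apply/negbTE/negP => /andP [inU /eqP s1].
have even_S (j : nat) b w : (s, S) \in T j b w -> {in S, forall i : 'I_n.+1, ~~ odd i}.
  by case/spt_codeP => _ above _ i /above /andP [_]; rewrite s1 /=; case: (odd i).
case/orP: inU => inT; have even := even_S _ _ _ inT; case/spt_codeP: inT => weight _ par.
  by move: odd_n; rewrite -weight oddD oddM s1 odd_sum_even_parts // par.
by have := congr1 odd weight; rewrite oddD oddM s1 odd_sum_even_parts // par /= odd_n.
Qed.

Definition shift_smallest (X : 'I_n.+1 * {set 'I_n.+1}) : 'I_n.+1 * {set 'I_n.+1} :=
  (inord X.1.+2, X.2 :\ inord X.1.+1).

Lemma shift_domain_bound s S : (s, S) \in T k false (n - k.*2) -> s.+3 <= n /\ k.*2 <= n.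
Proof.
case/spt_codeP => weight _ _; have : s.+1 <= s.+1 * k by rewrite leq_pmulr.
by rewrite -addnn; lia.
Qed.

Lemma shift_smallest_mem X :
  X \in T k false (n - k.*2) -> shift_smallest X \in [set Y in U | 1 < Y.1].
Proof.
case: X => s S XT; have [s3_le_n n2k] := shift_domain_bound XT.
set t : 'I_n.+1 := inord s.+2; set a : 'I_n.+1 := inord s.+1.
have t_eq : t = s.+2 :> nat by rewrite inordK //; lia.
have a_eq : a = s.+1 :> nat by rewrite inordK //; lia.
rewrite inE in_setU /shift_smallest /= t_eq andbT.
case: (boolP (a \in S)) => aS.
  have aNS' : a \notin S :\ a by rewrite setD11.
  have := mem_spt_code_shift_add k true (n - k.*2) t_eq a_eq aNS'.
  by rewrite subnK // setD1K //= XT => ->; rewrite orbT.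
have := mem_spt_code_shift k false (n - k.*2) t_eq a_eq aS.
by rewrite subnK // setD1_notin // XT => ->.
Qed.

Lemma shift_smallest_onto Y : Y \in [set Y in U | 1 < Y.1] ->
  exists2 X, X \in T k false (n - k.*2) & Y = shift_smallest X.
Proof.
case: Y => t S; rewrite inE in_setU /= => /andP [inU lt1t].
have t_lt := ltn_ord t.
set s : 'I_n.+1 := inord (t - 2); set a : 'I_n.+1 := inord (t - 1).
have s_eq : s = t - 2 :> nat by rewrite inordK //; lia.
have a_eq : a = s.+1 :> nat by rewrite inordK ?s_eq; lia.
have t_eq : t = s.+2 :> nat by rewrite s_eq; lia.
have [n2k aNS] : k.*2 <= n /\ a \notin S.
  have bounds j b w : (t, S) \in T j b w -> 3 * j <= w /\ a \notin S.
    case/spt_codeP => weight above _; split.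
      by rewrite -weight (leq_trans _ (leq_addr _ _)) // leq_mul2r ltnS lt1t orbT.
    by apply/negP => /above /andP []; rewrite a_eq t_eq ltnNge leqnSn.
  by case/orP: inU => /bounds [le_w aNS]; split => //; lia.
have shiftE S' : shift_smallest (s, S') = (t, S' :\ a).
  have ord_t : inord s.+2 = t by apply: val_inj; rewrite /= inordK -t_eq.
  have ord_a : inord s.+1 = a by apply: val_inj; rewrite /= inordK -a_eq.
  by rewrite /shift_smallest /= ord_t ord_a.
case/orP: inU => inT.
  exists (s, S); last by rewrite shiftE setD1_notin.
  by rewrite -(mem_spt_code_shift k false (n - k.*2) t_eq a_eq aNS) subnK.
exists (s, a |: S); last by rewrite shiftE setU1K.
rewrite -[false]/(~~ true).
by rewrite -(mem_spt_code_shift_add k true (n - k.*2) t_eq a_eq aNS) subnK.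
Qed.

Lemma shift_smallest_inj : {in T k false (n - k.*2) &, injective shift_smallest}.
Proof.
move=> [s1 S1] [s2 S2] X1T X2T [eq_t eq_S].
have [s1_le _] := shift_domain_bound X1T; have [s2_le _] := shift_domain_bound X2T.
have eq_s : s1 = s2.
  by apply: val_inj; move/(congr1 val): eq_t; rewrite /= !inordK //; lia.
subst s2; set a : 'I_n.+1 := inord s1.+1 in eq_S.
have /spt_codeP [_ _ par1] := X1T; have /spt_codeP [_ _ par2] := X2T.
have eq_a : (a \in S1) = (a \in S2).
  move: par1 par2; rewrite (cardsD1 a S1) (cardsD1 a S2) eq_S !oddD.
  by case: (a \in S1) (a \in S2) (odd #|S2 :\ a|) => [] [] [].
congr (_, _); case: (boolP (a \in S1)) => aS1.
  by rewrite -(setD1K aS1) -(setD1K (_ : a \in S2)) ?eq_S // -eq_a.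
by rewrite -(setD1_notin aS1) -(setD1_notin (_ : a \notin S2)) ?eq_S // -eq_a.
Qed.

Lemma card_smallest_shift : #|[set X in U | 1 < X.1]| = #|T k false (n - k.*2)|.
Proof.
rewrite -(card_in_imset shift_smallest_inj); apply: eq_card => Y.
by apply/idP/imsetP => [/shift_smallest_onto | [X /shift_smallest_mem + ->]].
Qed.

Lemma card_spt_code_recurrence : odd n ->
  #|T k false n| + #|T k.+1 true n.+1| =
  #|T k false (n - k.*2)| + (if k <= n then #|@pde_code n.+1 (n - k)| else 0).
Proof.
move=> odd_n; rewrite -card_spt_code_union (card_split_fst U) smallest_two_empty //.
rewrite cards0 addn0 card_smallest_shift addnC; congr (_ + _).
case: leqP => [/card_smallest_one // | lt_nk].
apply/eqP; rewrite cards_eq0; apply/eqP/setP => -[s S]; rewrite inE in_setU in_set0.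
by apply/negbTE/negP => /andP [/orP [] /spt_code_bound [] // + _ _ _]; lia.
Qed.

End Counting.

Lemma Bnat_spt_code N j b w : 0 < j -> w <= N -> Bnat b j w = #|@spt_code N j b w|.
Proof. by move=> j_gt0 le_wN; rewrite card_Bnat // (card_spt_code_widen le_wN). Qed.

Lemma pde_nat_pde_code N w : w <= N -> pde_nat w = #|@pde_code N w|.
Proof. by move=> le_wN; rewrite card_pde_nat (card_pde_code_widen le_wN). Qed.

Local Open Scope ring_scope.

Theorem lemma3 (k t : nat) (hk : (1 <= k)%N) (ht : (1 <= t)%N) :
  (B0 k (2 * t%:Z - 1) + B1 k.+1 (2 * t%:Z))%N =
  (B0 k (2 * t%:Z - 2 * k%:Z - 1) + pde (2 * t%:Z - k%:Z - 1))%N.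
Proof.
set n := (2 * t - 1)%N.
have odd_n : odd n.
  have -> : n = (t - 1).*2.+1 by rewrite /n; lia.
  by rewrite /= odd_double.
have -> : 2 * t%:Z - 1 = n by rewrite /n; lia.
have -> : 2 * t%:Z = n.+1 by rewrite /n; lia.
rewrite /B0 /B1 /pde !(Bnat_spt_code (N := n.+1)) // card_spt_code_recurrence //.
congr (_ + _)%N.
  case: (ltnP k t) => [lt_kt | le_tk].
    have -> : n.+1%:Z - 2 * k%:Z - 1 = (n - k.*2)%N by rewrite /n; lia.
    by rewrite (Bnat_spt_code (N := n.+1)) //; lia.
  have -> : n.+1%:Z - 2 * k%:Z - 1 = - (2 * k - 2 * t + 1)%N%:Z by lia.
  by rewrite addn1 (_ : (n - k.*2 = 0)%N) ?spt_code0 ?cards0 //; rewrite /n; lia.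
case: leqP => [le_kn | lt_nk].
  have -> : n.+1%:Z - k%:Z - 1 = (n - k)%N by rewrite /n; lia.
  by rewrite (pde_nat_pde_code (N := n.+1)) //; lia.
by have -> : n.+1%:Z - k%:Z - 1 = - (k - 2 * t)%N.+1%:Z by rewrite /n in lt_nk; lia.
Qed.
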